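(* For every prime power $q\ge 5$, $\chi_D(LG_q)=3$.
   Context: Let $\mathbb{F}_q$ be the field with $q$ elements and $V=\mathbb{F}_q^3$. Let $\mathcal{P}$ be the set of $1$-dimensional subspaces (''points'') and $\mathcal{L}$ the set of $2$-dimensional subspaces (''lines'') of $V$. The Levi graph $LG_q$ is the bipartite graph with vertex set $\mathcal{P}\sqcup\mathcal{L}$ in which a point $p$ is adjacent to a line $l$ iff $p\subset l$. A coloring is distinguishing if the only graph automorphism mapping every color class onto itself is the identity; $\chi_D(G)$ is the minimum number of colors of a proper distinguishing coloring of $G$. *)

From HB Require Import structures.
From mathcomp Require Import all_boot all_order all_algebra all_fingroup all_field.
Set Implicit Arguments. Unset Strict Implicit. Unset Printing Implicit Defensive.
Import GRing.Theory.
Local Open Scope ring_scope.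

(** Subspaces of V = F^3 (row vectors) are represented canonically by their
    row-space matrix <<A>>%MS (mxalgebra's canonical representative). *)

Definition pg_point (F : finFieldType) : finType :=
  {A : 'M[F]_3 | (<<A>>%MS == A) && (\rank A == 1)%N}.

Definition pg_line (F : finFieldType) : finType :=
  {A : 'M[F]_3 | (<<A>>%MS == A) && (\rank A == 2)%N}.

Definition LG_vertex (F : finFieldType) : finType := (pg_point F + pg_line F)%type.

Definition LG_adj (F : finFieldType) : rel (LG_vertex F) :=
  fun x y =>
    match x, y with
    | inl p, inr l => (val p <= val l)%MS
    | inr l, inl p => (val p <= val l)%MS
    | _, _ => false
    end.

Definition graph_aut (V : finType) (adj : rel V) (f : {perm V}) : Prop :=
  forall x y, adj (f x) (f y) = adj x y.

Definition proper_coloring (V : finType) (adj : rel V) (k : nat) (c : V -> 'I_k) : Prop :=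
  forall x y, adj x y -> c x != c y.

Definition distinguishing (V : finType) (adj : rel V) (k : nat) (c : V -> 'I_k) : Prop :=
  forall f : {perm V}, graph_aut adj f -> (forall x, c (f x) = c x) -> f = 1%g.

Definition has_proper_dist_coloring (V : finType) (adj : rel V) (k : nat) : Prop :=
  exists c : V -> 'I_k, proper_coloring adj c /\ distinguishing adj c.

Definition chiD_eq (V : finType) (adj : rel V) (k : nat) : Prop :=
  has_proper_dist_coloring adj k /\
  forall m, has_proper_dist_coloring adj m -> (k <= m)%N.

From HB Require Import structures.
From mathcomp Require Import all_boot all_order all_algebra all_fingroup all_field all_solvable.
From mathcomp Require Import ring.
Set Implicit Arguments. Unset Strict Implicit. Unset Printing Implicit Defensive.
Import GRing.Theory.
Local Open Scope ring_scope.

(* Colour the points 1 and the lines 0, except for a set S of points and a set M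
   of lines with no incidence between them, which get the colour 2.  Take the
   origin O = (0:0:1), the lines x = 0, y = 0, x = y through O, the line at
   infinity z = 0 and a generator w of the multiplicative group of F.  M consists
   of z = 0 and of the other lines through O; S consists of the affine points of
   x = 0, y = 0 and x = y other than O, X1 = (1:0:1), C1 = (1:1:1) and E = (w:w:1).
   A colour-preserving automorphism keeps points and lines apart; it fixes O,
   the only point on two marked lines other than z = 0 (there are at least three
   marked lines through O as q >= 5), hence z = 0, and it permutes the lines
   x = 0, y = 0, x = y, which carry 0, 1 and 2 unmarked affine points besides O.
   From the frame fixed in this way, two perspectivities through C1 and
   C2 = (w:1:1) act as multiplication by w on y = 0, so the whole line y = 0 is
   fixed, and then every point and line.  Conversely a proper 2-colouring is
   constant on points and on lines (any two points are joined, any two lines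
   meet), so it is preserved by swapping the coordinates x and y. *)

Notation incident p L := (val p <= val L)%MS.

Section ProjectivePlane.
Variable F : finFieldType.
Implicit Types (p q : pg_point F) (L M : pg_line F).

Lemma genmx_pg_point p : <<val p>>%MS = val p.
Proof. by case: p => A /= /andP[/eqP]. Qed.

Lemma rank_pg_point p : \rank (val p) = 1%N.
Proof. by case: p => A /= /andP[_ /eqP]. Qed.

Lemma genmx_pg_line L : <<val L>>%MS = val L.
Proof. by case: L => A /= /andP[/eqP]. Qed.

Lemma rank_pg_line L : \rank (val L) = 2%N.
Proof. by case: L => A /= /andP[_ /eqP]. Qed.

Lemma pg_point_eqmx p q : (val p == val q)%MS -> p = q.
Proof. by move/genmxP => E; apply: val_inj; rewrite -genmx_pg_point E genmx_pg_point. Qed.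

Lemma pg_line_eqmx L M : (val L == val M)%MS -> L = M.
Proof. by move/genmxP => E; apply: val_inj; rewrite -genmx_pg_line E genmx_pg_line. Qed.

Lemma eqmx_rank_geq m1 m2 (A : 'M[F]_(m1, 3)) (B : 'M[F]_(m2, 3)) :
  (A <= B)%MS -> (\rank B <= \rank A)%N -> (A == B)%MS.
Proof. by move=> sAB; rewrite (geq_leqif (mxrank_leqif_eq sAB)). Qed.

Lemma rank_adds_pg_point p q : p != q -> \rank (val p + val q)%MS = 2%N.
Proof.
move=> npq; apply/eqP; rewrite eqn_leq.
have [+ _] := mxrank_adds_leqif (val p) (val q); rewrite !rank_pg_point => -> /=.
rewrite ltnNge; apply: contra npq => r1.
have /eqmxP epq : (val p == val p + val q)%MS.
  by apply: eqmx_rank_geq; rewrite ?addsmxSl ?rank_pg_point.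
apply/eqP/esym/pg_point_eqmx/eqmx_rank_geq; last by rewrite !rank_pg_point.
by rewrite epq addsmxSr.
Qed.

Lemma incident_uniq_line p q L M : p != q ->
  incident p L -> incident q L -> incident p M -> incident q M -> L = M.
Proof.
move=> npq pL qL pM qM.
have span_pq (N : pg_line F) :
    incident p N -> incident q N -> (val p + val q == val N)%MS.
  move=> pN qN; apply: eqmx_rank_geq; first by rewrite addsmx_sub pN qN.
  by rewrite rank_adds_pg_point // rank_pg_line.
apply: pg_line_eqmx; apply/eqmxP.
exact: eqmx_trans (eqmx_sym (eqmxP (span_pq L pL qL))) (eqmxP (span_pq M pM qM)).
Qed.

Lemma incident_uniq_point p q L M : L != M ->
  incident p L -> incident p M -> incident q L -> incident q M -> p = q.
Proof.
move=> nLM pL pM qL qM; apply/eqP; apply: contraNT nLM => npq.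
by apply/eqP; apply: (incident_uniq_line npq).
Qed.

Lemma incident_point_neq p q L : incident p L -> ~~ incident q L -> p != q.
Proof. by move=> pL; apply: contraNneq => <-. Qed.

Lemma incident_line_neq p L M : incident p L -> ~~ incident p M -> L != M.
Proof. by move=> pL; apply: contraNneq => <-. Qed.

Definition vec3 (a b c : F) : 'rV[F]_3 := \row_(i < 3) nth 0 [:: a; b; c] i.

Lemma vec3_eq0 a b c : (vec3 a b c == 0) = [&& a == 0, b == 0 & c == 0].
Proof.
apply/eqP/and3P => [E|[/eqP-> /eqP-> /eqP->]].
  have coord (i : 'I_3) := congr1 (fun v : 'rV_3 => v 0 i) E.
  by have := coord 0; have := coord 1; have := coord 2%:R; rewrite !mxE /= => -> -> ->.
by apply/rowP => -[[|[|[|i]]] Hi]; rewrite !mxE.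
Qed.

Lemma vec3_nz1 a b c : a != 0 -> vec3 a b c != 0.
Proof. by rewrite vec3_eq0 => /negbTE->. Qed.

Lemma vec3_nz2 a b c : b != 0 -> vec3 a b c != 0.
Proof. by rewrite vec3_eq0 => /negbTE->; rewrite andbF. Qed.

Lemma vec3_nz3 a b c : c != 0 -> vec3 a b c != 0.
Proof. by rewrite vec3_eq0 => /negbTE->; rewrite !andbF. Qed.

Lemma vec3_scale k a b c : k *: vec3 a b c = vec3 (k * a) (k * b) (k * c).
Proof. by apply/rowP => -[[|[|[|i]]] Hi]; rewrite !mxE. Qed.

Lemma vec3_coords (v : 'rV[F]_3) : exists a b c, v = vec3 a b c.
Proof.
exists (v 0 0), (v 0 1), (v 0 2%:R).
by apply/rowP => -[[|[|[|i]]] Hi]; rewrite !mxE //=; congr (v _ _); apply: val_inj.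
Qed.

Lemma pg_point_genmx_proof (v : 'rV[F]_3) : v != 0 ->
  (<<<<v>>>>%MS == <<v>>%MS) && (\rank <<v>> == 1%N).
Proof. by move=> nzv; rewrite genmx_id eqxx genmxE rank_rV nzv. Qed.

Lemma pg_line_genmx_proof (A : 'M[F]_3) : \rank A = 2%N ->
  (<<<<A>>>>%MS == <<A>>%MS) && (\rank <<A>> == 2%N).
Proof. by move=> rA; rewrite genmx_id eqxx genmxE rA. Qed.

Lemma rank_kermx_tr (n : 'rV[F]_3) : n != 0 -> \rank (kermx n^T) = 2%N.
Proof. by move=> nzn; rewrite mxrank_ker mxrank_tr rank_rV nzn. Qed.

Definition pg_point0 : pg_point F :=
  Sub <<vec3 1 0 0>>%MS (pg_point_genmx_proof (vec3_nz1 0 0 (oner_neq0 F))).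
Definition pg_line0 : pg_line F :=
  Sub <<kermx (vec3 1 0 0)^T>>%MS
    (pg_line_genmx_proof (rank_kermx_tr (vec3_nz1 0 0 (oner_neq0 F)))).

(* Junk value: [pg_point_of 0] and [pg_line_of A] with [\rank A != 2] are
   default elements. *)
Definition pg_point_of (v : 'rV[F]_3) : pg_point F := insubd pg_point0 <<v>>%MS.
Definition pg_line_of (A : 'M[F]_3) : pg_line F := insubd pg_line0 <<A>>%MS.

Lemma val_pg_point_of v : v != 0 -> val (pg_point_of v) = <<v>>%MS.
Proof. by move=> nzv; rewrite val_insubd pg_point_genmx_proof. Qed.

Lemma val_pg_line_of A : \rank A = 2%N -> val (pg_line_of A) = <<A>>%MS.
Proof. by move=> rA; rewrite val_insubd pg_line_genmx_proof. Qed.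

(* [pt3 a b c] is the point [(a : b : c)], [ln3 a b c] the line [a x + b y + c z = 0]. *)
Definition pt3 a b c := pg_point_of (vec3 a b c).
Definition ln3 a b c := pg_line_of (kermx (vec3 a b c)^T).

Lemma incident_pt3_ln3 a b c d e g : vec3 a b c != 0 -> vec3 d e g != 0 ->
  incident (pt3 a b c) (ln3 d e g) = (a * d + b * e + c * g == 0).
Proof.
move=> nzv nzn; rewrite val_pg_point_of // val_pg_line_of ?rank_kermx_tr //.
rewrite !genmxE sub_kermx; apply/eqP/eqP => [/matrixP/(_ 0 0)|E].
  by rewrite !mxE !big_ord_recl big_ord0 !mxE /= addr0 addrA.
apply/matrixP => i j; rewrite !ord1 !mxE !big_ord_recl big_ord0 !mxE /=.
by rewrite addr0 addrA.
Qed.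

Lemma pt3_100_neq_010 : pt3 1 0 0 != pt3 0 1 0.
Proof.
have nz100 : vec3 (1 : F) 0 0 != 0 by rewrite vec3_nz1 ?oner_eq0.
have nz010 : vec3 (0 : F) 1 0 != 0 by rewrite vec3_nz2 ?oner_eq0.
apply: contraTneq (_ : incident (pt3 1 0 0) (ln3 0 1 0)) => [->|].
  by rewrite incident_pt3_ln3 // !(mul0r, mulr0, mul1r, add0r, addr0) oner_eq0.
by rewrite incident_pt3_ln3 // !(mul0r, mulr0, mul1r, add0r, addr0).
Qed.

Lemma pt3_scale k a b c : k != 0 -> vec3 a b c != 0 ->
  pt3 (k * a) (k * b) (k * c) = pt3 a b c.
Proof.
move=> nzk nzv; rewrite /pt3 -vec3_scale; apply: val_inj.
rewrite !val_pg_point_of ?scaler_eq0 ?negb_or ?nzk //.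
exact/genmxP/eqmxP/eqmx_scale.
Qed.

Lemma pg_point_coords p : exists a b c, vec3 a b c != 0 /\ p = pt3 a b c.
Proof.
have nzv : nz_row (val p) != 0 by rewrite nz_row_eq0 -mxrank_eq0 rank_pg_point.
have [a [b [c Ev]]] := vec3_coords (nz_row (val p)).
exists a, b, c; rewrite /pt3 -Ev; split => //; apply: val_inj.
rewrite val_pg_point_of // -{1}(genmx_pg_point p).
apply/genmxP/eqmxP/eqmx_sym/eqmxP/eqmx_rank_geq.
  exact: nz_row_sub.
by rewrite rank_pg_point rank_rV nzv.
Qed.

Lemma exists_meet L M : exists p, incident p L && incident p M.
Proof.
set C := (val L :&: val M)%MS.
have nzC : nz_row C != 0.
  rewrite nz_row_eq0 -mxrank_eq0; apply/eqP => rC.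
  have := mxrank_sum_cap (val L) (val M); rewrite -/C rC !rank_pg_line addn0.
  by move=> r4; have := rank_leq_col (val L + val M)%MS; rewrite r4.
exists (pg_point_of (nz_row C)); rewrite val_pg_point_of // !genmxE.
by rewrite !(submx_trans (nz_row_sub C)) ?capmxSl ?capmxSr.
Qed.

Lemma exists_join p q : exists L, incident p L && incident q L.
Proof.
suff join_distinct p' q' : p' != q' -> exists L, incident p' L && incident q' L.
  have [<-|/join_distinct //] := eqVneq p q.
  have [<-|/join_distinct [L /andP[_ pL]]] := eqVneq (pt3 1 0 0) p; last first.
    by exists L; rewrite pL.
  have [L /andP[pL _]] := join_distinct _ _ pt3_100_neq_010.
  by exists L; rewrite pL.
move=> npq; exists (pg_line_of (val p' + val q')%MS).
rewrite val_pg_line_of ?rank_adds_pg_point //.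
by rewrite !genmxE addsmxSl addsmxSr.
Qed.

Lemma pg_line_two_points L : exists p q, [/\ p != q, incident p L & incident q L].
Proof.
have nzL : nz_row (val L) != 0 by rewrite nz_row_eq0 -mxrank_eq0 rank_pg_line.
set p := pg_point_of (nz_row (val L)).
have pL : incident p L by rewrite val_pg_point_of // genmxE nz_row_sub.
have [i Li] : exists i, ~~ (row i (val L) <= val p)%MS.
  by apply/row_subPn/negP => /mxrankS; rewrite rank_pg_line rank_pg_point.
have nzi : row i (val L) != 0 by apply: contraNneq Li => ->; rewrite sub0mx.
exists p, (pg_point_of (row i (val L))); split => //.
  by apply: contraNneq Li => ->; rewrite val_pg_point_of // genmxE.
by rewrite val_pg_point_of // genmxE row_sub.
Qed.

End ProjectivePlane.

Section Collineation.
Variables (F : finFieldType) (fp : pg_point F -> pg_point F) (fl : pg_line F -> pg_line F).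
Hypothesis incident_f : forall p L, incident (fp p) (fl L) = incident p L.

Lemma fixed_line_through p q L : p != q -> fp p = p -> fp q = q ->
  incident p L -> incident q L -> fl L = L.
Proof.
move=> npq fpp fqq pL qL; apply: (incident_uniq_line npq) => //.
  by rewrite -fpp incident_f.
by rewrite -fqq incident_f.
Qed.

Lemma fixed_point_on p L M : L != M -> fl L = L -> fl M = M ->
  incident p L -> incident p M -> fp p = p.
Proof.
move=> nLM flL flM pL pM; apply: (incident_uniq_point nLM) => //.
  by rewrite -flL incident_f.
by rewrite -flM incident_f.
Qed.

End Collineation.

Section LeviGraph.
Variable F : finFieldType.
Local Notation adj := (@LG_adj F).

Definition is_point (x : LG_vertex F) : bool := if x is inl _ then true else false.

Lemma LG_adj_side x y : adj x y -> is_point x = ~~ is_point y.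
Proof. by case: x y => [p|L] [q|M]. Qed.

Lemma LG_adj_neighbour x : exists y, adj x y.
Proof.
case: x => [p|L].
  by have [L /andP[pL _]] := exists_join p p; exists (inr L).
by have [p /andP[pL _]] := exists_meet L L; exists (inl p).
Qed.

Lemma ord2_neq_eq (i j k : 'I_2) : i != k -> j != k -> i = j.
Proof. by case: i j k => [[|[|?]] ?] [[|[|?]] ?] [[|[|?]] ?] //= _ _; apply: val_inj. Qed.

(* Any two points are joined by a line and any two lines meet, so a proper
   2-colouring is constant on points and on lines. *)
Lemma proper_2coloring_side_invariant (c : LG_vertex F -> 'I_2) (g : LG_vertex F -> LG_vertex F) :
  proper_coloring adj c -> (forall x, is_point (g x) = is_point x) ->
  forall x, c (g x) = c x.
Proof.
move=> proper_c side_g x; move: (side_g x).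
case: x => [p|L]; case: (g _) => [q|M] //= _.
  have [L /andP[qL pL]] := exists_join q p.
  by apply: (@ord2_neq_eq _ _ (c (inr L))); apply: proper_c.
have [p /andP[pM pL]] := exists_meet M L.
by apply: (@ord2_neq_eq _ _ (c (inl p))); apply: proper_c.
Qed.

Section SidePreserving.
Variable f : {perm LG_vertex F}.
Hypothesis side_f : forall x, is_point (f x) = is_point x.

Definition perm_point (p : pg_point F) : pg_point F := if f (inl p) is inl q then q else p.
Definition perm_line (L : pg_line F) : pg_line F := if f (inr L) is inr M then M else L.

Lemma perm_pointE p : f (inl p) = inl (perm_point p).
Proof. by move: (side_f (inl p)); rewrite /perm_point; case: (f _). Qed.

Lemma perm_lineE L : f (inr L) = inr (perm_line L).
Proof. by move: (side_f (inr L)); rewrite /perm_line; case: (f _). Qed.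

Lemma perm_point_inj : injective perm_point.
Proof. by move=> p q E; apply/(@inl_inj _ (pg_line F))/(@perm_inj _ f); rewrite !perm_pointE E. Qed.

Lemma perm_line_inj : injective perm_line.
Proof. by move=> L M E; apply/(@inr_inj (pg_point F))/(@perm_inj _ f); rewrite !perm_lineE E. Qed.

Lemma incident_perm : graph_aut adj f ->
  forall p L, incident (perm_point p) (perm_line L) = incident p L.
Proof. by move=> aut_f p L; have := aut_f (inl p) (inr L); rewrite perm_pointE perm_lineE. Qed.

Lemma perm_side_eq1 : (forall p, perm_point p = p) -> (forall L, perm_line L = L) -> f = 1%g.
Proof.
move=> idp idl; apply/permP => -[p|L]; rewrite perm1.
  by rewrite perm_pointE idp.
by rewrite perm_lineE idl.
Qed.

End SidePreserving.

Section MatrixCollineation.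
Variables (A : 'M[F]_3) (unitA : A \in unitmx).

Let freeA : row_free A. Proof. by rewrite row_free_unit. Qed.

Definition mx_point (p : pg_point F) : pg_point F := insubd p <<val p *m A>>%MS.
Definition mx_line (L : pg_line F) : pg_line F := insubd L <<val L *m A>>%MS.

Lemma val_mx_point p : val (mx_point p) = <<val p *m A>>%MS.
Proof. by rewrite val_insubd genmx_id eqxx genmxE mxrankMfree // rank_pg_point. Qed.

Lemma val_mx_line L : val (mx_line L) = <<val L *m A>>%MS.
Proof. by rewrite val_insubd genmx_id eqxx genmxE mxrankMfree // rank_pg_line. Qed.

Lemma mx_point_inj : injective mx_point.
Proof.
move=> p q /(congr1 val); rewrite !val_mx_point => /genmxP.
by rewrite /eqmx !submxMfree // => /pg_point_eqmx.
Qed.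

Lemma mx_line_inj : injective mx_line.
Proof.
move=> L M /(congr1 val); rewrite !val_mx_line => /genmxP.
by rewrite /eqmx !submxMfree // => /pg_line_eqmx.
Qed.

Definition mx_vertex (x : LG_vertex F) : LG_vertex F :=
  match x with inl p => inl (mx_point p) | inr L => inr (mx_line L) end.

Lemma mx_vertex_inj : injective mx_vertex.
Proof.
by move=> [p|L] [q|M] //= [] => [/mx_point_inj->|/mx_line_inj->].
Qed.

Definition mx_perm : {perm LG_vertex F} := perm mx_vertex_inj.

Lemma mx_perm_aut : graph_aut adj mx_perm.
Proof. by move=> [p|L] [q|M]; rewrite !permE //= val_mx_point val_mx_line !genmxE submxMfree. Qed.

Lemma mx_perm_side x : is_point (mx_perm x) = is_point x.
Proof. by rewrite permE; case: x. Qed.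

Lemma mx_perm_pt3 a b c : vec3 a b c != 0 ->
  mx_perm (inl (pt3 a b c)) = inl (pg_point_of (vec3 a b c *m A)).
Proof.
move=> nzv; rewrite permE /=; congr inl; apply: val_inj.
have nzvA : vec3 a b c *m A != 0 by rewrite mulmx_free_eq0.
by rewrite val_mx_point !val_pg_point_of //; apply/genmxP/eqmxP/eqmxMr/genmxE.
Qed.

End MatrixCollineation.

Lemma vec3_mul_swap_xy (a b c : F) :
  vec3 a b c *m perm_mx (tperm (0 : 'I_3) 1) = vec3 b a c.
Proof.
rewrite -[tperm _ _]tpermV -col_permE; apply/rowP => -[[|[|[|j]]] Hj] //;
  by rewrite !mxE permE.
Qed.

Lemma swap_xy_perm_neq1 : mx_perm (@unitmx_perm F 3 (tperm 0 1)) != 1%g.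
Proof.
apply/eqP => /(congr1 (fun g : {perm _} => g (inl (pt3 1 0 0)))).
rewrite perm1 mx_perm_pt3 ?vec3_nz1 ?oner_eq0 // vec3_mul_swap_xy => -[] swapped.
have e1_eq_e2 : pt3 (1 : F) 0 0 = pt3 0 1 0 := esym swapped.
by move: (@pt3_100_neq_010 F); rewrite e1_eq_e2 eqxx.
Qed.

Lemma LG_no_dist_coloring_lt3 m : (m < 3)%N -> ~ has_proper_dist_coloring adj m.
Proof.
case: m => [|[|[|//]]] _ [c [proper_c dist_c]].
- by case: (c (inl (pt3 (1 : F) 0 0))).
- have [L /andP[pL _]] := exists_join (pt3 (1 : F) 0 0) (pt3 (1 : F) 0 0).
  have := proper_c (inl (pt3 (1 : F) 0 0)) (inr L) pL.
  by rewrite (ord1 (c _)) (ord1 (c (inr L))) eqxx.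
- apply: (negP swap_xy_perm_neq1); apply/eqP; apply: dist_c; first exact: mx_perm_aut.
  exact: proper_2coloring_side_invariant (mx_perm_side _).
Qed.

End LeviGraph.

Section Coloring.
Variables (F : finFieldType) (w : F).
Hypotheses (w_neq0 : w != 0) (w_neq1 : w != 1).

Local Notation O := (pt3 (0 : F) 0 1).
Local Notation U := (pt3 (1 : F) 0 0).
Local Notation V := (pt3 (0 : F) 1 0).
Local Notation X t := (pt3 t 0 1).
Local Notation C1 := (pt3 (1 : F) 1 1).
Local Notation C2 := (pt3 w 1 1).
Local Notation E := (pt3 w w 1).
Local Notation Lx0 := (ln3 (1 : F) 0 0).
Local Notation Ly0 := (ln3 (0 : F) 1 0).
Local Notation Lxy := (ln3 (1 : F) (-1) 0).
Local Notation Lz0 := (ln3 (0 : F) 0 1).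

Ltac nonzero := by rewrite ?oppr_eq0 ?oner_eq0 ?subr_eq0 // eq_sym.
Ltac vec3_neq0 := first [ done
  | apply: vec3_nz3; nonzero | apply: vec3_nz1; nonzero | apply: vec3_nz2; nonzero ].
Ltac incidence := rewrite incident_pt3_ln3; [apply/eqP; ring | vec3_neq0 | vec3_neq0].
(* [v] is the value of the incidence form [a d + b e + c g], checked by [ring]. *)
Ltac nonincidence v :=
  rewrite incident_pt3_ln3; [rewrite (_ : _ + _ + _ = v); [nonzero | ring] | vec3_neq0 | vec3_neq0].

Definition marked_point (p : pg_point F) : bool :=
  [&& [|| incident p Lx0, incident p Ly0 | incident p Lxy], p != O,
      ~~ incident p Lz0 & p \notin [:: X 1; C1; E]].

Definition marked_line (L : pg_line F) : bool :=
  incident O L && (L \notin [:: Lx0; Ly0; Lxy]) || (L == Lz0).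

Definition LG_coloring (x : LG_vertex F) : 'I_3 :=
  match x with
  | inl p => if marked_point p then Ordinal (isT : (2 < 3)%N) else Ordinal (isT : (1 < 3)%N)
  | inr L => if marked_line L then Ordinal (isT : (2 < 3)%N) else Ordinal (isT : (0 < 3)%N)
  end.

Lemma O_notin_Lz0 : ~~ incident O Lz0. Proof. by nonincidence (1 : F). Qed.

Lemma marked_point_not_incident p L : marked_point p -> marked_line L -> ~~ incident p L.
Proof.
case/and4P=> p_axis p_neqO p_finite _ /orP[/andP[OL]|/eqP-> //].
apply: contra => pL; have line_pO M : incident p M -> incident O M -> L = M.
  exact: incident_uniq_line p_neqO pL OL.
rewrite !inE; case/or3P: p_axis => pM; rewrite (line_pO _ pM) ?eqxx ?orbT //; incidence.
Qed.

Lemma LG_coloring_proper : proper_coloring (@LG_adj F) LG_coloring.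
Proof.
move=> [p|L] [q|M] //= pq.
  by case: ifP => mp; case: ifP => // mq; move: (marked_point_not_incident mp mq); rewrite pq.
by case: ifP => mL; case: ifP => // mq; move: (marked_point_not_incident mq mL); rewrite pq.
Qed.

Section Distinguishing.
Variables (fp : pg_point F -> pg_point F) (fl : pg_line F -> pg_line F).
Hypotheses (fp_inj : injective fp) (fl_inj : injective fl).
Hypothesis incident_f : forall p L, incident (fp p) (fl L) = incident p L.
Hypothesis marked_point_f : forall p, marked_point (fp p) = marked_point p.
Hypothesis marked_line_f : forall L, marked_line (fl L) = marked_line L.
Variables a1 a2 a3 : F.
Hypothesis uniq_a : uniq [:: 0; 1; a1; a2; a3].
Hypothesis w_gen : forall t, t != 0 -> exists k, t = w ^+ k.

Lemma slope_line_marked (a : F) : a != 0 -> a != 1 -> marked_line (ln3 a (-1) 0).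
Proof.
move=> a_neq0 a_neq1; have on_slope : incident (pt3 1 a 0) (ln3 a (-1) 0) by incidence.
rewrite /marked_line !inE; apply/orP; left; apply/andP; split; first by incidence.
rewrite !negb_or; apply/and3P; split; apply: (incident_line_neq on_slope).
- by nonincidence (1 : F).
- by nonincidence a.
- by nonincidence (1 - a).
Qed.

Lemma slope_line_inj (a b : F) : a != b -> ln3 a (-1) 0 != ln3 b (-1) 0.
Proof.
move=> nab; have on_slope : incident (pt3 1 a 0) (ln3 a (-1) 0) by incidence.
by apply: (incident_line_neq on_slope); nonincidence (b - a).
Qed.

Lemma marked_line_through_O L : marked_line L -> L != Lz0 -> incident O L.
Proof. by case/orP => [/andP[]//|/eqP->]; rewrite eqxx. Qed.

(* At least two of three marked lines through [O] avoid [Lz0], and their images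
   can only meet at [O]. *)
Lemma fp_O : fp O = O.
Proof.
move: uniq_a; rewrite /= !inE !negb_or.
move=> /and4P[/and4P[_ n01 n02 n03] /and3P[n11 n12 n13] /andP[n12' n13'] /andP[n23 _]].
pose M a := fl (ln3 a (-1) 0).
have M_marked a : 0 != a -> 1 != a -> marked_line (M a).
  by move=> ? ?; rewrite marked_line_f slope_line_marked // eq_sym.
have fO_M a : incident (fp O) (M a) by rewrite incident_f; incidence.
have M_inj a b : a != b -> M a != M b by move/slope_line_inj; apply: contra_neq => /fl_inj.
have meet_at_O a b : 0 != a -> 1 != a -> 0 != b -> 1 != b -> a != b ->
    M a != Lz0 -> M b != Lz0 -> fp O = O.
  move=> a0 a1' b0 b1' nab nMa nMb; apply: (incident_uniq_point (M_inj _ _ nab)) => //.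
    exact: marked_line_through_O (M_marked _ a0 a1') nMa.
  exact: marked_line_through_O (M_marked _ b0 b1') nMb.
have [Ea1|Ea1] := eqVneq (M a1) Lz0.
  by apply: (meet_at_O _ _ n02 n12 n03 n13 n23); rewrite -Ea1 M_inj // eq_sym.
have [Ea2|Ea2] := eqVneq (M a2) Lz0.
  by apply: (meet_at_O _ _ n01 n11 n03 n13 n13'); rewrite -Ea2 M_inj // eq_sym.
exact: (meet_at_O _ _ n01 n11 n02 n12 n12').
Qed.

Lemma fl_Lz0 : fl Lz0 = Lz0.
Proof.
have := marked_line_f Lz0; rewrite {2}/marked_line eqxx orbT /marked_line.
by rewrite -{1}fp_O incident_f (negbTE O_notin_Lz0) => /eqP.
Qed.

Definition axis (L : pg_line F) : bool := incident O L && ~~ marked_line L.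

Lemma axis_f L : axis (fl L) = axis L.
Proof. by rewrite /axis marked_line_f -{1}fp_O incident_f. Qed.

Lemma axisE L : axis L = (L \in [:: Lx0; Ly0; Lxy]).
Proof.
rewrite /axis /marked_line; have [OL|] /= := boolP (incident O L); last first.
  move=> nOL; apply/esym/negbTE; apply: contra nOL.
  by rewrite !inE => /or3P[] /eqP->; incidence.
by rewrite negb_or negbK andbC (incident_line_neq OL O_notin_Lz0).
Qed.

Definition exceptional (L : pg_line F) (p : pg_point F) : bool :=
  [&& incident p L, p != O, ~~ incident p Lz0 & ~~ marked_point p].

Lemma exceptional_f L p : exceptional (fl L) (fp p) = exceptional L p.
Proof.
rewrite /exceptional incident_f -{1}fp_O (inj_eq fp_inj) -{1}fl_Lz0.
by rewrite incident_f marked_point_f.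
Qed.

Lemma exceptional_axis L p : axis L -> exceptional L p -> p \in [:: X 1; C1; E].
Proof.
rewrite axisE !inE => L_axis /and4P[pL nO nLz]; apply: contraNT => p_notin.
rewrite /marked_point !inE nO nLz p_notin !andbT.
by case/or3P: L_axis pL => /eqP-> ->; rewrite ?orbT.
Qed.

Lemma exceptional_special L p : p \in [:: X 1; C1; E] -> exceptional L p = incident p L.
Proof.
move=> p_special; rewrite /exceptional /marked_point p_special !andbF andbT.
rewrite !inE in p_special.
have p_finite : ~~ incident p Lz0.
  by case/or3P: p_special => /eqP->; nonincidence (1 : F).
have p_neqO : p != O.
  apply: contraTneq (_ : ~~ incident p Lx0) => [->|]; first by rewrite negbK; incidence.
  by case/or3P: p_special => /eqP->; [nonincidence (1 : F) | nonincidence (1 : F) | nonincidence w].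
by rewrite p_finite p_neqO !andbT.
Qed.

Lemma exceptional_Lx0 p : ~~ exceptional Lx0 p.
Proof.
apply/negP => p_exc.
have p_special : p \in [:: X 1; C1; E].
  by apply: exceptional_axis p_exc; rewrite axisE !inE eqxx.
rewrite exceptional_special // in p_exc; rewrite !inE in p_special.
by case/or3P: p_special p_exc => /eqP->; apply/negP;
  [nonincidence (1 : F) | nonincidence (1 : F) | nonincidence w].
Qed.

Lemma exceptional_Ly0 p : exceptional Ly0 p -> p = X 1.
Proof.
move=> p_exc.
have p_special : p \in [:: X 1; C1; E].
  by apply: exceptional_axis p_exc; rewrite axisE !inE eqxx orbT.
rewrite exceptional_special // in p_exc; rewrite !inE in p_special.
by case/or3P: p_special p_exc => /eqP-> //; apply: contraTeq => _;
  [nonincidence (1 : F) | nonincidence w].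
Qed.

Lemma exceptional_Lxy p : exceptional Lxy p -> p \in [:: C1; E].
Proof.
move=> p_exc.
have p_special : p \in [:: X 1; C1; E].
  by apply: exceptional_axis p_exc; rewrite axisE !inE eqxx !orbT.
rewrite exceptional_special // in p_exc; rewrite !inE in p_special *.
by case/or3P: p_special p_exc => /eqP->; rewrite ?eqxx ?orbT //;
  apply: contraTT => _; nonincidence (1 : F).
Qed.

Lemma C1_neq_E : C1 != E.
Proof.
apply: (@incident_point_neq _ _ _ (ln3 1 0 (-1))); first by incidence.
by nonincidence (w - 1).
Qed.

Lemma fl_Lxy : fl Lxy = Lxy.
Proof.
have exc_C1 : exceptional Lxy C1 by rewrite exceptional_special ?inE ?eqxx ?orbT //; incidence.
have exc_E : exceptional Lxy E by rewrite exceptional_special ?inE ?eqxx ?orbT //; incidence.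
have : axis (fl Lxy) by rewrite axis_f axisE !inE eqxx !orbT.
rewrite axisE !inE => /or3P[] /eqP fLxy //.
  by move: (exceptional_Lx0 (fp C1)); rewrite -fLxy exceptional_f exc_C1.
move: exc_C1 exc_E; rewrite -!(exceptional_f Lxy) fLxy => /exceptional_Ly0 fC1 /exceptional_Ly0 fE.
by move: C1_neq_E; rewrite -(inj_eq fp_inj) fC1 fE eqxx.
Qed.

Lemma fl_Ly0 : fl Ly0 = Ly0.
Proof.
have exc_X1 : exceptional Ly0 (X 1) by rewrite exceptional_special ?inE ?eqxx //; incidence.
have : axis (fl Ly0) by rewrite axis_f axisE !inE eqxx orbT.
rewrite axisE !inE => /or3P[] /eqP fLy0 //.
  by move: (exceptional_Lx0 (fp (X 1))); rewrite -fLy0 exceptional_f exc_X1.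
have X1_Ly0 : incident (X 1) Ly0 by incidence.
have X1_Lxy : ~~ incident (X 1) Lxy by nonincidence (1 : F).
move: (incident_line_neq X1_Ly0 X1_Lxy).
by rewrite -(inj_eq fl_inj) fLy0 fl_Lxy eqxx.
Qed.

Lemma fl_Lx0 : fl Lx0 = Lx0.
Proof.
have V_Lx0 : incident V Lx0 by incidence.
have : axis (fl Lx0) by rewrite axis_f axisE !inE eqxx.
rewrite axisE !inE => /or3P[] /eqP fLx0 //.
  have V_Ly0 : ~~ incident V Ly0 by nonincidence (1 : F).
  by move: (incident_line_neq V_Lx0 V_Ly0); rewrite -(inj_eq fl_inj) fLx0 fl_Ly0 eqxx.
have V_Lxy : ~~ incident V Lxy by nonincidence (-1 : F).
by move: (incident_line_neq V_Lx0 V_Lxy); rewrite -(inj_eq fl_inj) fLx0 fl_Lxy eqxx.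
Qed.

Lemma fp_X1 : fp (X 1) = X 1.
Proof.
apply: exceptional_Ly0; rewrite -fl_Ly0 exceptional_f.
by rewrite exceptional_special ?inE ?eqxx //; incidence.
Qed.

Lemma fp_V : fp V = V.
Proof.
apply: (fixed_point_on incident_f (L := Lx0) (M := Lz0));
  [| exact: fl_Lx0 | exact: fl_Lz0 | incidence | incidence].
by apply: (incident_line_neq (p := O)); [incidence | exact: O_notin_Lz0].
Qed.

Lemma fp_U : fp U = U.
Proof.
apply: (fixed_point_on incident_f (L := Ly0) (M := Lz0));
  [| exact: fl_Ly0 | exact: fl_Lz0 | incidence | incidence].
by apply: (incident_line_neq (p := O)); [incidence | exact: O_notin_Lz0].
Qed.

Lemma fp_C1 : fp C1 = C1.
Proof.
have fl_Lxz : fl (ln3 1 0 (-1)) = ln3 1 0 (-1).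
  apply: (fixed_line_through incident_f (p := X 1) (q := V));
    [| exact: fp_X1 | exact: fp_V | incidence | incidence].
  by apply: (incident_point_neq (L := Ly0)); [incidence | nonincidence (1 : F)].
apply: (fixed_point_on incident_f (L := ln3 1 0 (-1)) (M := Lxy));
  [| exact: fl_Lxz | exact: fl_Lxy | incidence | incidence].
by apply: (incident_line_neq (p := X 1)); [incidence | nonincidence (1 : F)].
Qed.

Lemma fp_E : fp E = E.
Proof.
have exc_E : exceptional Lxy E by rewrite exceptional_special ?inE ?eqxx ?orbT //; incidence.
have := exc_E; rewrite -exceptional_f fl_Lxy => /exceptional_Lxy; rewrite !inE.
by case/orP=> /eqP // fE; move: C1_neq_E; rewrite -(inj_eq fp_inj) fE fp_C1 eqxx.
Qed.

Lemma fp_C2 : fp C2 = C2.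
Proof.
have fl_Lyz : fl (ln3 0 1 (-1)) = ln3 0 1 (-1).
  apply: (fixed_line_through incident_f (p := C1) (q := U));
    [| exact: fp_C1 | exact: fp_U | incidence | incidence].
  by apply: (incident_point_neq (L := Lxy)); [incidence | nonincidence (1 : F)].
have fl_Lxwz : fl (ln3 1 0 (- w)) = ln3 1 0 (- w).
  apply: (fixed_line_through incident_f (p := E) (q := V));
    [| exact: fp_E | exact: fp_V | incidence | incidence].
  by apply: (incident_point_neq (L := Lxy)); [incidence | nonincidence (-1 : F)].
apply: (fixed_point_on incident_f (L := ln3 0 1 (-1)) (M := ln3 1 0 (- w)));
  [| exact: fl_Lyz | exact: fl_Lxwz | incidence | incidence].
by apply: (incident_line_neq (p := U)); [incidence | nonincidence (1 : F)].
Qed.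

(* Projecting [X t] from [C1] onto [Lx0], and the result back from [C2] onto
   [Ly0], gives [X (w * t)]. *)
Lemma fp_X_mulw t : fp (X t) = X t -> fp (X (w * t)) = X (w * t).
Proof.
move=> fXt; set Y := pt3 0 t (t - 1).
have nzY : vec3 0 t (t - 1) != 0.
  by have [->|] := eqVneq t 0; [rewrite sub0r vec3_nz3 ?oppr_eq0 ?oner_eq0 | apply: vec3_nz2].
have fl_M1 : fl (ln3 1 (t - 1) (- t)) = ln3 1 (t - 1) (- t).
  apply: (fixed_line_through incident_f (p := X t) (q := C1));
    [| exact: fXt | exact: fp_C1 | incidence | incidence].
  by apply: (incident_point_neq (L := Ly0)); [incidence | nonincidence (1 : F)].
have fY : fp Y = Y.
  apply: (fixed_point_on incident_f (L := ln3 1 (t - 1) (- t)) (M := Lx0));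
    [| exact: fl_M1 | exact: fl_Lx0 | incidence | incidence].
  by apply: (incident_line_neq (p := C1)); [incidence | nonincidence (1 : F)].
have fl_M2 : fl (ln3 (-1) (- (w * (t - 1))) (w * t)) = ln3 (-1) (- (w * (t - 1))) (w * t).
  apply: (fixed_line_through incident_f (p := Y) (q := C2));
    [| exact: fY | exact: fp_C2 | incidence | incidence].
  by apply: (incident_point_neq (L := Lx0)); [incidence | nonincidence w].
apply: (fixed_point_on incident_f (L := ln3 (-1) (- (w * (t - 1))) (w * t)) (M := Ly0));
  [| exact: fl_M2 | exact: fl_Ly0 | incidence | incidence].
by apply: (incident_line_neq (p := C2)); [incidence | nonincidence (1 : F)].
Qed.

Lemma fp_X t : fp (X t) = X t.
Proof.
have [->|/w_gen[k ->]] := eqVneq t 0; first exact: fp_O.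
elim: k => [|k IHk]; first by rewrite expr0 fp_X1.
by rewrite exprS; apply: fp_X_mulw.
Qed.

Lemma fl_vertical a : fl (ln3 1 0 (- a)) = ln3 1 0 (- a).
Proof.
apply: (fixed_line_through incident_f (p := X a) (q := V));
  [| exact: fp_X | exact: fp_V | incidence | incidence].
by apply: (incident_point_neq (L := Ly0)); [incidence | nonincidence (1 : F)].
Qed.

Lemma fp_diagonal t : fp (pt3 t t 1) = pt3 t t 1.
Proof.
apply: (fixed_point_on incident_f (L := ln3 1 0 (- t)) (M := Lxy));
  [| exact: fl_vertical | exact: fl_Lxy | incidence | incidence].
by apply: (incident_line_neq (p := V)); [incidence | nonincidence (-1 : F)].
Qed.

Lemma fl_horizontal b : fl (ln3 0 1 (- b)) = ln3 0 1 (- b).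
Proof.
apply: (fixed_line_through incident_f (p := pt3 b b 1) (q := U));
  [| exact: fp_diagonal | exact: fp_U | incidence | incidence].
by apply: (incident_point_neq (L := Lxy)); [incidence | nonincidence (1 : F)].
Qed.

Lemma fp_affine a b : fp (pt3 a b 1) = pt3 a b 1.
Proof.
apply: (fixed_point_on incident_f (L := ln3 1 0 (- a)) (M := ln3 0 1 (- b)));
  [| exact: fl_vertical | exact: fl_horizontal | incidence | incidence].
by apply: (incident_line_neq (p := V)); [incidence | nonincidence (1 : F)].
Qed.

Lemma fp_infinite x y : vec3 x y 0 != 0 -> fp (pt3 x y 0) = pt3 x y 0.
Proof.
move=> nzv; have nzN : vec3 y (- x) 0 != 0.
  by move: nzv; rewrite !vec3_eq0 oppr_eq0 !eqxx !andbT andbC.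
have fl_N : fl (ln3 y (- x) 0) = ln3 y (- x) 0.
  apply: (fixed_line_through incident_f (p := O) (q := pt3 x y 1));
    [| exact: fp_O | exact: fp_affine | incidence | incidence].
  have [x0|x_neq0] := eqVneq x 0.
    have y_neq0 : y != 0 by move: nzv; rewrite x0 vec3_eq0 eqxx andbT.
    by apply: (incident_point_neq (L := Ly0)); [incidence | nonincidence y].
  by apply: (incident_point_neq (L := Lx0)); [incidence | nonincidence x].
apply: (fixed_point_on incident_f (L := ln3 y (- x) 0) (M := Lz0));
  [| exact: fl_N | exact: fl_Lz0 | incidence | incidence].
by apply: (incident_line_neq (p := O)); [incidence | exact: O_notin_Lz0].
Qed.

Lemma fp_id p : fp p = p.
Proof.
have [a [b [c [nzv ->]]]] := pg_point_coords p.
have [c0|c_neq0] := eqVneq c 0; first by rewrite c0 in nzv *; apply: fp_infinite.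
have -> : pt3 a b c = pt3 (a / c) (b / c) 1.
  rewrite -(pt3_scale (k := c) (a := a / c) (b := b / c) (c := 1)) ?vec3_nz3 ?oner_eq0 //.
  by rewrite !(mulrC c) !divfK // mul1r.
exact: fp_affine.
Qed.

Lemma fl_id L : fl L = L.
Proof.
have [p [q [npq pL qL]]] := pg_line_two_points L.
exact: (fixed_line_through incident_f npq (fp_id p) (fp_id q) pL qL).
Qed.

End Distinguishing.

Lemma LG_coloring_unmarked_side x :
  nat_of_ord (LG_coloring x) != 2%N -> is_point x = (nat_of_ord (LG_coloring x) == 1%N).
Proof. by case: x => [p|L] /=; case: ifP. Qed.

(* Only marked vertices share their colour with the other side; a marked vertex
   is adjacent to an unmarked one, whose side is preserved. *)
Lemma LG_coloring_side f : graph_aut (@LG_adj F) f ->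
  (forall x, LG_coloring (f x) = LG_coloring x) -> forall x, is_point (f x) = is_point x.
Proof.
move=> aut_f col_f x.
have [c2|c_neq2] := eqVneq (nat_of_ord (LG_coloring x)) 2%N; last first.
  by rewrite LG_coloring_unmarked_side ?col_f // LG_coloring_unmarked_side.
have [y xy] := LG_adj_neighbour x.
have cy_neq2 : nat_of_ord (LG_coloring y) != 2%N.
  apply: contraNneq (LG_coloring_proper xy) => cy2.
  by apply/eqP/val_inj; rewrite /= c2 cy2.
have fxy : LG_adj (f x) (f y) by rewrite aut_f.
rewrite (LG_adj_side xy) (LG_adj_side fxy).
by rewrite LG_coloring_unmarked_side ?col_f // LG_coloring_unmarked_side.
Qed.

Lemma LG_coloring_distinguishing (a1 a2 a3 : F) : uniq [:: 0; 1; a1; a2; a3] ->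
  (forall t, t != 0 -> exists k, t = w ^+ k) -> distinguishing (@LG_adj F) LG_coloring.
Proof.
move=> uniq_a w_gen f aut_f col_f; have side_f := LG_coloring_side aut_f col_f.
have incident_f := incident_perm side_f aut_f.
have marked_point_f p : marked_point (perm_point f p) = marked_point p.
  by have := col_f (inl p); rewrite (perm_pointE side_f) /=; do 2 case: ifP.
have marked_line_f L : marked_line (perm_line f L) = marked_line L.
  by have := col_f (inr L); rewrite (perm_lineE side_f) /=; do 2 case: ifP.
have fp_inj := perm_point_inj side_f; have fl_inj := perm_line_inj side_f.
apply: (perm_side_eq1 side_f) => [p|L].
  exact: (fp_id fp_inj fl_inj incident_f marked_point_f marked_line_f uniq_a w_gen p).
exact: (fl_id fp_inj fl_inj incident_f marked_point_f marked_line_f uniq_a w_gen L).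
Qed.

End Coloring.

Lemma finField_unit_generator (F : finFieldType) : (2 < #|F|)%N ->
  exists w : F, [/\ w != 0, w != 1 & forall t, t != 0 -> exists k, t = w ^+ k].
Proof.
move=> F_gt2; have /cyclicP [u gen_u] := field_unit_group_cyclic [set: {unit F}]%G.
have w_gen t : t != 0 -> exists k, t = FinRing.uval u ^+ k.
  rewrite -unitfE => t_unit.
  have : FinRing.Unit t_unit \in <[u]>%g by rewrite -gen_u inE.
  by case/cycleP => k Ek; exists k; rewrite -FinRing.val_unitX -Ek.
exists (FinRing.uval u); split => //.
  by rewrite -unitfE (valP u).
apply: contraTneq F_gt2 => u1; rewrite -leqNgt.
have sub01 : [set: F] \subset [set 0; 1].
  apply/subsetP => t _; rewrite !inE; have [->//|/w_gen[k ->]] := eqVneq t 0.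
  by rewrite u1 expr1n eqxx orbT.
by rewrite -cardsT; apply: leq_trans (subset_leq_card sub01) _; rewrite cards2; case: (_ != _).
Qed.

Lemma finField_three_scalars (F : finFieldType) : (5 <= #|F|)%N ->
  exists a1 a2 a3 : F, uniq [:: 0; 1; a1; a2; a3].
Proof.
move=> F_ge5; pose A := ~: [set (0 : F); 1].
have A_ge3 : (3 <= #|A|)%N.
  have := cardsC [set (0 : F); 1]; rewrite cards2 eq_sym oner_eq0 => E.
  by rewrite -(leq_add2l 2) E.
have [a1 a1A] : exists a, a \in A by apply/card_gt0P; apply: leq_trans A_ge3.
have A1_ge2 : (2 <= #|A :\ a1|)%N by move: A_ge3; rewrite (cardsD1 a1) a1A.
have [a2 a2A] : exists a, a \in A :\ a1 by apply/card_gt0P; apply: leq_trans A1_ge2.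
have A2_ge1 : (1 <= #|A :\ a1 :\ a2|)%N by move: A1_ge2; rewrite (cardsD1 a2) a2A.
have [a3 a3A] : exists a, a \in A :\ a1 :\ a2 by apply/card_gt0P.
exists a1, a2, a3; move: a1A a2A a3A; rewrite !inE !negb_or.
move=> /andP[a10 a11] /and3P[a21 a20 a22] /and4P[a32 a31 a30 a33].
rewrite /= !inE !negb_or !(eq_sym 1) !(eq_sym 0) oner_eq0.
by rewrite (eq_sym a1 a2) (eq_sym a1 a3) (eq_sym a2 a3) a10 a11 a20 a21 a22 a30 a31 a32 a33.
Qed.

Theorem mainTheorem2 (F : finFieldType) (hq : (5 <= #|F|)%N) :
  chiD_eq (@LG_adj F) 3.
Proof.
have [w [w_neq0 w_neq1 w_gen]] := finField_unit_generator (leq_trans (isT : (2 < 5)%N) hq).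
have [a1 [a2 [a3 uniq_a]]] := finField_three_scalars hq.
split.
  exists (LG_coloring w); split; first exact: LG_coloring_proper.
  exact: (LG_coloring_distinguishing w_neq0 w_neq1 uniq_a w_gen).
move=> m dist_m; rewrite leqNgt; apply/negP => m_lt3.
exact: LG_no_dist_coloring_lt3 m_lt3 dist_m.
Qed.
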